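(* Let $\chi$ be a Dirichlet character mod $q$ induced by the primitive Dirichlet character $\psi$ mod $q_0$. Then for each $n\ge1$, $$\sum_{d\mid n}\tau(d,\chi)\,\mu(\tfrac nd)\,\overline{\psi(\tfrac nd)}=\begin{cases}n\,\tau(\psi)\,\mu(\frac{q}{nq_0})\,\psi(\frac{q}{nq_0}),& n\mid\frac q{q_0},\\ 0,& n\nmid\frac q{q_0}.\end{cases}$$
   Context: A Dirichlet character mod $m$ is a completely multiplicative $m$-periodic function with $\chi(n)\ne0$ iff $\gcd(n,m)=1$. $\psi$ mod $q_0$ induces $\chi$ mod $q$ if $q_0\mid q$ and $\chi=\psi\chi_q$ with $\chi_q$ the principal character mod $q$; primitive means not induced by a character of modulus a proper divisor. $\mu$ is the Möbius function. For a character $\chi$ mod $m$, $\tau(n,\chi)=\sum_{k=1}^m\chi(k)e^{2\pi ikn/m}$ and $\tau(\chi)=\tau(1,\chi)$. *)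

From mathcomp Require Import all_boot all_order all_algebra.
From mathcomp Require Import all_classical all_reals trigo.
From mathcomp.real_closed Require Export complex.
Import GRing.Theory Num.Theory.
Set Implicit Arguments. Unset Strict Implicit. Unset Printing Implicit Defensive.
Local Open Scope ring_scope.
Local Open Scope complex_scope.

Definition moebius (n : nat) : int :=
  if n == 0%N then 0
  else if all (fun p => logn p n == 1%N) (primes n)
       then (-1) ^+ size (primes n) else 0.

Section Dirichlet.
Variable R : realType.

Definition expi (x : R) : R[i] := cos (2 * pi * x) +i* sin (2 * pi * x).

(* chi : nat -> C is a Dirichlet character modulo m (m >= 1).  Characters are
   determined by their values on nonnegative integers by periodicity. *)
Definition is_dchar (m : nat) (chi : nat -> R[i]) : Prop :=
  (0 < m)%N /\
  (forall n, chi (n + m)%N = chi n) /\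
  (forall a b, chi (a * b)%N = chi a * chi b) /\
  (forall n, chi n != 0 <-> coprime n m).

Definition principal (q : nat) (n : nat) : R[i] := if coprime n q then 1 else 0.

Definition induces (q0 : nat) (psi : nat -> R[i]) (q : nat) (chi : nat -> R[i]) : Prop :=
  is_dchar q0 psi /\ is_dchar q chi /\ (q0 %| q)%N /\
  (forall n, chi n = psi n * principal q n).

Definition primitive (q0 : nat) (psi : nat -> R[i]) : Prop :=
  is_dchar q0 psi /\
  forall (d : nat) (phi : nat -> R[i]), (d %| q0)%N -> d != q0 -> ~ induces d phi q0 psi.

Definition gauss (m : nat) (chi : nat -> R[i]) (n : nat) : R[i] :=
  \sum_(1 <= k < m.+1) chi k * expi ((k * n)%:R / m%:R).

End Dirichlet.

From mathcomp Require Import all_boot all_order all_algebra.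
From mathcomp Require Import all_classical all_reals trigo.
From mathcomp.real_closed Require Import complex.
From mathcomp Require Import cyclic ring.
Import GRing.Theory Num.Theory.

(* Write r = q / q0.  As chi = psi * chi_q, Moebius inversion over the divisors of r gives
   chi(k) = sum_{e | (k, r)} mu(e) psi(k); splitting tau(d, chi) accordingly and summing
   the additive characters over the residues modulo r / e yields
     tau(d, chi) = sum_{s | (r, d)} s mu(r/s) psi(r/s) tau(d/s, psi).
   For primitive psi, tau(m, psi) = conj(psi(m)) tau(psi) for every m: substitute k -> m k
   when (m, q0) = 1; otherwise tau(m, psi) = psi(c) tau(m, psi) for all units c = 1 modulo
   q0 / (m, q0), and primitivity provides such a c with psi(c) <> 1.  After this
   substitution, the twisted Moebius sum over d | n keeps only the term s = n. *)

Set Implicit Arguments.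
Unset Strict Implicit.
Unset Printing Implicit Defensive.
Local Open Scope ring_scope.
Local Open Scope complex_scope.

Section AdditiveCharacter.
Variable R : realType.

Lemma expiD (x y : R) : expi (x + y) = expi x * expi y.
Proof.
rewrite /expi mulrDr cosD sinD [RHS]/GRing.mul /=.
by congr (_ +i* _); rewrite addrC.
Qed.

Lemma expi0 : expi (0 : R) = 1.
Proof. by rewrite /expi mulr0 cos0 sin0. Qed.

Lemma expiMn (x : R) (b : nat) : expi (b%:R * x) = expi x ^+ b.
Proof.
elim: b => [|b IH]; first by rewrite mul0r expi0 expr0.
by rewrite -addn1 natrD mulrDl mul1r expiD IH addn1 exprSr.
Qed.

Lemma expi_nat (k : nat) : expi (k%:R : R) = 1.
Proof.
rewrite -[k%:R]mulr1 expiMn /expi mulr1 mulr_natl.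
by rewrite cos2pi sin2pi expr1n.
Qed.

Lemma cos_lt1 (y : R) : 0 < y < pi *+ 2 -> cos y < 1.
Proof.
move=> /andP[y0 y2]; rewrite [y]splitr cosD -expr2 cos2sin2.
have s0 : 0 < sin (y / 2).
  by apply: sin_gt0_pi; rewrite divr_gt0 // ltr_pdivrMr // mulr_natr.
by rewrite -expr2 -(addrA 1) gtrDl -opprD oppr_lt0 addr_gt0 // exprn_gt0.
Qed.

Lemma expi_neq1 (x : R) : 0 < x < 1 -> expi x != 1.
Proof.
move=> /andP[x0 x1]; apply/eqP => /(congr1 (@complex.Re R)) /= cos1.
suff : cos (2 * pi * x) < 1 by rewrite cos1 Order.POrderTheory.ltxx.
apply: cos_lt1; rewrite !mulr_gt0 ?pi_gt0 //=.
by rewrite -(mulr_natl pi 2) -[X in _ < X]mulr1 ltr_pM2l // mulr_gt0 // pi_gt0.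
Qed.

Definition efrac (m a : nat) : R[i] := expi (a%:R / m%:R).

Lemma efracD m a b : efrac m (a + b) = efrac m a * efrac m b.
Proof. by rewrite /efrac natrD mulrDl expiD. Qed.

Lemma efracX m a b : efrac m (b * a) = efrac m a ^+ b.
Proof. by rewrite /efrac natrM -mulrA expiMn. Qed.

Lemma efracMl e m a : (0 < e)%N -> efrac (e * m) (e * a) = efrac m a.
Proof.
move=> e_gt0; have e_neq0 : (e%:R : R) != 0 by rewrite pnatr_eq0 -lt0n.
by rewrite /efrac !natrM invfM mulrACA divff // mul1r.
Qed.

Lemma efrac_mod m a : (0 < m)%N -> efrac m a = efrac m (a %% m).
Proof.
move=> m_gt0; rewrite {1}(divn_eq a m) /efrac natrD mulrDl expiD natrM mulfK.
  by rewrite expi_nat mul1r.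
by rewrite pnatr_eq0 -lt0n.
Qed.

Lemma efrac_eqmod m a b : (0 < m)%N -> a = b %[mod m] -> efrac m a = efrac m b.
Proof. by move=> m_gt0 eq_ab; rewrite efrac_mod // eq_ab -efrac_mod. Qed.

Lemma efrac_multiple m a : (0 < m)%N -> efrac m (m * a) = 1.
Proof. by move=> m_gt0; rewrite efrac_mod // modnMr /efrac mul0r expi0. Qed.

Lemma efrac_neq1 m a : (0 < m)%N -> ~~ (m %| a)%N -> efrac m a != 1.
Proof.
move=> m_gt0 m_ndvd_a; rewrite efrac_mod //; apply: expi_neq1.
have m_gt0' : (0 : R) < m%:R by rewrite ltr0n.
have rem_gt0 : (0 < a %% m)%N by rewrite lt0n.
by rewrite divr_gt0 ?ltr0n // ltr_pdivrMr // mul1r ltr_nat ltn_mod.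
Qed.

Lemma sum_efrac m d : (0 < m)%N ->
  \sum_(b < m) efrac m (b * d) = if (m %| d)%N then m%:R else 0.
Proof.
move=> m_gt0; under eq_bigr => b _ do rewrite efracX.
case: ifP => [/dvdnP[k ->] | m_ndvd_d].
  rewrite mulnC efrac_multiple //.
  by under eq_bigr => b _ do rewrite expr1n; rewrite sumr_const card_ord.
have : (efrac m d - 1) * \sum_(b < m) efrac m d ^+ b = 0.
  by rewrite -subrX1 -efracX efrac_multiple // subrr.
by move/eqP; rewrite mulf_eq0 subr_eq0 (negbTE (efrac_neq1 _ _)) ?m_ndvd_d // => /eqP.
Qed.

End AdditiveCharacter.

Arguments efrac {R} m a.

Section DirichletCharacter.
Variables (R : realType) (m : nat) (chi : nat -> R[i]).
Hypothesis chi_dchar : is_dchar m chi.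

Lemma dchar_modulus_gt0 : (0 < m)%N.
Proof. by case: chi_dchar. Qed.

Lemma dcharM a b : chi (a * b)%N = chi a * chi b.
Proof. by case: chi_dchar => _ [_ []]. Qed.

Lemma dcharDmull a k : chi (a + k * m)%N = chi a.
Proof.
case: chi_dchar => _ [chi_per _].
by elim: k => [|k IH]; rewrite ?addn0 // mulSn addnCA addnC chi_per IH.
Qed.

Lemma dchar_mod a : chi a = chi (a %% m)%N.
Proof. by rewrite {1}(divn_eq a m) addnC dcharDmull. Qed.

Lemma dchar_eqmod a b : a = b %[mod m] -> chi a = chi b.
Proof. by move=> eq_ab; rewrite dchar_mod eq_ab -dchar_mod. Qed.

Lemma dchar_neq0 a : (chi a != 0) = coprime a m.
Proof. by case: chi_dchar => _ [_ [_ chi_neq0]]; apply/idP/idP => /chi_neq0. Qed.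

Lemma dchar_ncoprime a : ~~ coprime a m -> chi a = 0.
Proof. by rewrite -dchar_neq0 negbK => /eqP. Qed.

Lemma dchar1 : chi 1%N = 1.
Proof.
have chi1_neq0 : chi 1%N != 0 by rewrite dchar_neq0 coprime1n.
by apply: (mulfI chi1_neq0); rewrite mulr1 -dcharM.
Qed.

Lemma dcharX a k : chi (a ^ k)%N = chi a ^+ k.
Proof. by elim: k => [|k IH]; rewrite ?dchar1 // expnS dcharM IH exprS. Qed.

Lemma conj_dcharK a : coprime a m -> (chi a)^* * chi a = 1.
Proof.
move=> a_coprime.
have totient_gt0 : (0 < totient m)%N by rewrite totient_gt0 dchar_modulus_gt0.
have chiX : chi a ^+ totient m = 1.
  by rewrite -dcharX (dchar_eqmod (Euler_exp_totient a_coprime)) dchar1.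
have norm1 : `|chi a| = 1.
  apply/eqP; rewrite -(pexpr_eq1 (n := totient m)) -?lt0n //.
  by rewrite -normrX chiX normr1.
by rewrite mulrC -normCK norm1 expr1n.
Qed.

End DirichletCharacter.

Section OrdinalSums.
Variable V : nmodType.
Implicit Type G : nat -> V.

Lemma sum_ord_blocks m N G :
  \sum_(j < m * N) G j = \sum_(b < N) \sum_(a < m) G (m * b + a)%N.
Proof.
rewrite -(big_mkord xpredT) mulnC big_nat_mul big_mkord; apply: eq_bigr => b _.
rewrite mulSn addnC -{1}[(b * m)%N]add0n big_addn addKn big_mkord.
by apply: eq_bigr => a _; rewrite addnC mulnC.
Qed.

Lemma sum_ord_dvd e N G : (0 < e)%N ->
  \sum_(k < e * N | (e %| k)%N) G k = \sum_(j < N) G (e * j)%N.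
Proof.
case: e => // e _.
rewrite big_mkcond (sum_ord_blocks _ _ (fun k => if (e.+1 %| k)%N then G k else 0)).
apply: eq_bigr => j _.
rewrite big_ord_recl /= addn0 dvdn_mulr // big1 ?addr0 // => a _.
by rewrite dvdn_addr ?dvdn_mulr // gtnNdvd // /bump add1n ltnS.
Qed.

Lemma sum_ord_mulmod m c G : (0 < m)%N -> coprime c m ->
  \sum_(a < m) G a = \sum_(a < m) G (c * a %% m)%N.
Proof.
move=> m_gt0 c_coprime.
have [c' c'c] : exists c', (c' * c = 1 %[mod m])%N.
  exists (c ^ (totient m).-1)%N.
  by rewrite -expnSr prednK ?totient_gt0 // Euler_exp_totient.
pose mulc (a : 'I_m) := Ordinal (ltn_pmod (c * a) m_gt0).
have mulc_inj : injective mulc.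
  move=> a b /(congr1 val) /= eq_ab; apply: val_inj => /=.
  rewrite -(modn_small (ltn_ord a)) -(modn_small (ltn_ord b)).
  rewrite -[val a]mul1n -[val b]mul1n -modnMml -c'c modnMml -mulnA -modnMmr eq_ab.
  by rewrite modnMmr mulnA -modnMml c'c modnMml.
by rewrite (reindex_inj mulc_inj).
Qed.

End OrdinalSums.

Lemma moebius_primeM p d : prime p ->
  moebius (p * d) = if (p %| d)%N then 0 else - moebius d.
Proof.
move=> p_pr; have p_gt0 := prime_gt0 p_pr.
have [->|d_gt0] := posnP d; first by rewrite muln0 dvdn0.
have pd_gt0 : (0 < p * d)%N by rewrite muln_gt0 p_gt0.
rewrite /moebius muln_eq0 !(negbTE (lt0n_neq0 _)) //=.
have logn_pd : logn p (p * d) = (logn p d).+1 by rewrite lognM // logn_prime // eqxx.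
have p_primes : p \in primes (p * d) by rewrite mem_primes p_pr pd_gt0 dvdn_mulr.
have [p_dvd_d|p_ndvd_d] := boolP (p %| d)%N.
  suff -> : all (fun r => logn r (p * d) == 1%N) (primes (p * d)) = false by [].
  apply/negbTE/allPn; exists p => //.
  by rewrite logn_pd eqSS -lt0n logn_gt0 mem_primes p_pr d_gt0 p_dvd_d.
have primes_pd : perm_eq (primes (p * d)) (p :: primes d).
  apply: uniq_perm; first exact: primes_uniq.
    by rewrite /= primes_uniq andbT mem_primes (negbTE p_ndvd_d) !andbF.
  by move=> r; rewrite primesM // primes_prime // inE.
have logn_d : logn p d = 0%N.
  by apply/eqP; rewrite -leqn0 leqNgt logn_gt0 mem_primes (negbTE p_ndvd_d) !andbF.
rewrite (perm_all _ primes_pd) (perm_size primes_pd) /= logn_pd logn_d eqxx /=.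
have -> : all (fun r => logn r (p * d) == 1%N) (primes d)
        = all (fun r => logn r d == 1%N) (primes d).
  apply: eq_in_all => r; rewrite mem_primes => /and3P[r_pr _ r_dvd_d].
  have r_neq_p : r != p by apply: contraNneq p_ndvd_d => <-.
  by rewrite lognM // logn_prime // (negbTE r_neq_p).
by case: ifP => //; rewrite exprS mulN1r.
Qed.

Lemma perm_filter_dvd_divisors n s : (0 < n)%N -> (s %| n)%N ->
  perm_eq [seq d <- divisors n | (s %| d)%N] [seq (s * d)%N | d <- divisors (n %/ s)].
Proof.
move=> n_gt0 s_dvd_n; have s_gt0 := dvdn_gt0 n_gt0 s_dvd_n.
have ns_gt0 : (0 < n %/ s)%N by rewrite divn_gt0 // dvdn_leq.
apply: uniq_perm; first by rewrite filter_uniq // divisors_uniq.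
  by rewrite map_inj_uniq ?divisors_uniq // => a b /eqP; rewrite eqn_pmul2l // => /eqP.
move=> x; rewrite mem_filter -dvdn_divisors //; apply/andP/mapP.
  move=> [/dvdnP[j ->] j_dvd]; exists j; last by rewrite mulnC.
  by rewrite -dvdn_divisors // -(dvdn_pmul2r s_gt0) divnK.
move=> [d]; rewrite -dvdn_divisors // => d_dvd ->; split; first exact: dvdn_mulr.
by rewrite -(divnK s_dvd_n) mulnC dvdn_pmul2r.
Qed.

Lemma divn_div_id n d : (0 < n)%N -> (d %| n)%N -> (n %/ (n %/ d))%N = d.
Proof. by move=> n_gt0 d_dvd_n; rewrite divnA // mulKn. Qed.

Lemma perm_divisors_divn n : (0 < n)%N ->
  perm_eq (divisors n) [seq (n %/ d)%N | d <- divisors n].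
Proof.
move=> n_gt0.
have divnK' : {in divisors n, involutive (divn n)}.
  by move=> d; rewrite -dvdn_divisors // => /(divn_div_id n_gt0).
apply: uniq_perm; first exact: divisors_uniq.
  by rewrite (map_inj_in_uniq (can_in_inj divnK')) divisors_uniq.
move=> x; apply/idP/mapP => [x_div | [d d_div ->]].
  by exists (n %/ x)%N; rewrite ?divnK' // -dvdn_divisors // dvdn_div // dvdn_divisors.
by rewrite -dvdn_divisors // dvdn_div // dvdn_divisors.
Qed.

Lemma perm_filter_ndvd_divisors n p : prime p -> (0 < n)%N -> (p %| n)%N ->
  perm_eq [seq d <- divisors n | ~~ (p %| d)%N] [seq d <- divisors (n %/ p) | ~~ (p %| d)%N].
Proof.
move=> p_pr n_gt0 p_dvd_n.
have np_gt0 : (0 < n %/ p)%N by rewrite divn_gt0 ?prime_gt0 // dvdn_leq.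
apply: uniq_perm; rewrite ?filter_uniq ?divisors_uniq //.
move=> x; rewrite !mem_filter -!dvdn_divisors //.
have [//|p_ndvd_x /=] := boolP (p %| x)%N.
rewrite -{1}(divnK p_dvd_n) Gauss_dvdl // coprime_sym prime_coprime //.
Qed.

Lemma sum_moebius_divisors n : (0 < n)%N ->
  \sum_(d <- divisors n) moebius d = (n == 1%N)%:R.
Proof.
move=> n_gt0; have [->|n_neq1] := eqVneq n 1%N.
  by rewrite (_ : divisors 1 = [:: 1%N]) // big_seq1.
have n_gt1 : (1 < n)%N by rewrite ltn_neqAle eq_sym n_neq1 n_gt0.
set p := pdiv n; have p_pr : prime p := pdiv_prime n_gt1.
have p_dvd_n : (p %| n)%N := pdiv_dvd n.
rewrite (bigID (fun d => p %| d)%N) /= -(big_filter _ (fun d => p %| d)%N).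
rewrite -(big_filter _ (fun d => ~~ (p %| d))%N).
rewrite (perm_big _ (perm_filter_dvd_divisors n_gt0 p_dvd_n)).
rewrite (perm_big _ (perm_filter_ndvd_divisors p_pr n_gt0 p_dvd_n)) big_map /=.
under eq_bigr => d _ do rewrite moebius_primeM //.
rewrite (bigID (fun d => p %| d)%N) /= big1 ?add0r; last by move=> d ->.
under eq_bigr => d p_ndvd_d do rewrite (negbTE p_ndvd_d).
by rewrite sumrN big_filter addNr.
Qed.

Lemma sum_moebius_codivisors_dvd n s : (0 < n)%N -> (0 < s)%N ->
  \sum_(d <- divisors n | (s %| d)%N) moebius (n %/ d) = (s == n)%:R.
Proof.
move=> n_gt0 s_gt0; have [s_dvd_n|s_ndvd_n] := boolP (s %| n)%N; last first.
  rewrite big1_seq; last first.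
    move=> d /andP[s_dvd_d]; rewrite -dvdn_divisors // => d_dvd_n.
    by rewrite (dvdn_trans s_dvd_d d_dvd_n) in s_ndvd_n.
  by case: eqP => // s_eq_n; rewrite s_eq_n dvdnn in s_ndvd_n.
rewrite -big_filter (perm_big _ (perm_filter_dvd_divisors n_gt0 s_dvd_n)) big_map /=.
have [k n_eq] := dvdnP s_dvd_n; rewrite n_eq in n_gt0 *.
have k_gt0 : (0 < k)%N by move: n_gt0; rewrite muln_gt0 => /andP[].
rewrite mulnK //.
under eq_bigr => d _ do rewrite [(k * s)%N]mulnC divnMl //.
rewrite -(big_map (divn k) xpredT moebius) -(perm_big _ (perm_divisors_divn k_gt0)).
by rewrite sum_moebius_divisors // -{1}(mul1n s) eqn_pmul2r // eq_sym.
Qed.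

Lemma sum_pred1_uniq (V : nmodType) (I : eqType) (s : seq I) (a : I) (F : I -> V) :
  uniq s -> \sum_(i <- s | i == a) F i = if a \in s then F a else 0.
Proof.
move=> s_uniq; case: ifP => [a_in | a_notin].
  by rewrite -big_filter filter_pred1_uniq // big_seq1.
by rewrite big1_seq // => i /andP[/eqP -> a_in]; rewrite a_in in a_notin.
Qed.

Lemma sum_moebius_twisted (K : comPzRingType) (f c : nat -> K) n r :
    (0 < n)%N -> (0 < r)%N -> f 1%N = 1 -> {morph f : a b / (a * b)%N >-> a * b} ->
  \sum_(d <- divisors n)
     (\sum_(s <- divisors r | (s %| d)%N) c s * f (d %/ s)%N)
       * (moebius (n %/ d))%:~R * f (n %/ d)%N
  = if (n %| r)%N then c n else 0.
Proof.
move=> n_gt0 r_gt0 f1 fM.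
have summandE d : d \in divisors n ->
    (\sum_(s <- divisors r | (s %| d)%N) c s * f (d %/ s)%N)
       * (moebius (n %/ d))%:~R * f (n %/ d)%N
  = \sum_(s <- divisors r)
      (if (s %| d)%N then c s * f (n %/ s)%N * (moebius (n %/ d))%:~R else 0).
  rewrite -dvdn_divisors // => d_dvd_n; rewrite big_mkcond !mulr_suml.
  apply: eq_bigr => s _; case: ifP => [s_dvd_d|_]; last by rewrite !mul0r.
  have -> : (n %/ s = n %/ d * (d %/ s))%N by rewrite muln_divA // divnK.
  by rewrite fM [f _ * _]mulrC mulrA mulrAC.
rewrite (eq_big_seq _ summandE) exchange_big /=.
rewrite (eq_big_seq (fun s => if s == n then c n else 0)); last first.
  move=> s; rewrite -dvdn_divisors // => s_dvd_r; have s_gt0 := dvdn_gt0 r_gt0 s_dvd_r.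
  rewrite -big_mkcond /= -mulr_sumr -rmorph_sum sum_moebius_codivisors_dvd //.
  by case: eqP => [->|_]; rewrite ?divnn ?n_gt0 ?f1 ?mulr1 ?mulr0.
by rewrite -big_mkcond sum_pred1_uniq ?divisors_uniq // -dvdn_divisors.
Qed.

Lemma coprime_prime_ndvd x m : (0 < m)%N ->
  (forall p, prime p -> (p %| m)%N -> ~~ (p %| x)%N) -> coprime x m.
Proof.
move=> m_gt0 no_common_prime; apply: contraT => x_ncoprime.
have g_gt1 : (1 < gcdn x m)%N by rewrite ltn_neqAle eq_sym x_ncoprime gcdn_gt0 m_gt0 orbT.
have p_dvd_g := pdiv_dvd (gcdn x m).
have := no_common_prime _ (pdiv_prime g_gt1) (dvdn_trans p_dvd_g (dvdn_gcdr _ _)).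
by rewrite (dvdn_trans p_dvd_g (dvdn_gcdl _ _)).
Qed.

(* For n coprime to q1, a number congruent to n modulo q1 that has no prime factor
   in common with q0. *)
Definition coprime_lift (q0 q1 n : nat) : nat :=
  (n + q1 * \prod_(p <- primes q0 | ~~ (p %| n)) p)%N.

Lemma coprime_lift_mod q0 q1 n : coprime_lift q0 q1 n = n %[mod q1].
Proof. by rewrite /coprime_lift addnC mulnC modnMDl. Qed.

Lemma coprime_lift_coprime q0 q1 n : (0 < q0)%N -> coprime n q1 ->
  coprime (coprime_lift q0 q1 n) q0.
Proof.
move=> q0_gt0 n_coprime; apply: coprime_prime_ndvd => // p p_pr p_dvd_q0.
rewrite /coprime_lift; set P := (\prod_(_ <- _ | _) _)%N.
have p_dvd_P : (p %| P)%N = ~~ (p %| n)%N.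
  rewrite Euclid_dvd_prod // big_has_cond; apply/hasP/idP => [[r]|p_ndvd_n].
    rewrite mem_primes => /and3P[r_pr _ _] /andP[r_ndvd_n].
    by rewrite dvdn_prime2 // => /eqP ->.
  by exists p; rewrite ?mem_primes ?p_pr ?q0_gt0 //= p_ndvd_n dvdnn.
have [p_dvd_n|p_ndvd_n] := boolP (p %| n)%N.
  rewrite dvdn_addr // Euclid_dvdM // p_dvd_P p_dvd_n orbF.
  apply: contraL (prime_gt1 p_pr) => p_dvd_q1.
  by rewrite -leqNgt dvdn_leq // -(eqP n_coprime) dvdn_gcd p_dvd_n.
by rewrite dvdn_addl ?dvdn_mull ?p_dvd_P.
Qed.

Section Descent.
Variables (R : realType) (q0 q1 : nat) (psi : nat -> R[i]).
Hypotheses (psi_dchar : is_dchar q0 psi) (q1_dvd_q0 : (q1 %| q0)%N).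
Hypothesis psi_ker : forall c, coprime c q0 -> c = 1 %[mod q1] -> psi c = 1.

Let q0_gt0 : (0 < q0)%N := dchar_modulus_gt0 psi_dchar.

Lemma dchar_eqmod_divisor x y : coprime x q0 -> coprime y q0 ->
  x = y %[mod q1] -> psi x = psi y.
Proof.
move=> x_coprime y_coprime eq_xy.
have t_gt0 : (0 < totient q0)%N by rewrite totient_gt0.
pose c := (y * x ^ (totient q0).-1)%N.
have x_tot : (x ^ totient q0 = 1 %[mod q0])%N := Euler_exp_totient x_coprime.
have cx_y : (c * x = y %[mod q0])%N.
  by rewrite /c -mulnA -expnSr prednK // -modnMmr x_tot modnMmr muln1.
have c_ker : (c = 1 %[mod q1])%N.
  rewrite /c -modnMml -eq_xy modnMml [(x * _)%N]mulnC -expnSr prednK //.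
  by rewrite -(modn_dvdm _ q1_dvd_q0) x_tot (modn_dvdm _ q1_dvd_q0).
have c_coprime : coprime c q0 by rewrite coprimeMl y_coprime coprimeXl.
rewrite -(dchar_eqmod psi_dchar cx_y) (dcharM psi_dchar).
by rewrite (psi_ker c_coprime c_ker) mul1r.
Qed.

Definition descent (n : nat) : R[i] :=
  if coprime n q1 then psi (coprime_lift q0 q1 n) else 0.

Lemma descent_induces : induces q1 descent q0 psi.
Proof.
have lift_coprime n : coprime n q1 -> coprime (coprime_lift q0 q1 n) q0.
  exact: coprime_lift_coprime.
have psi_lift n : coprime n q1 -> coprime n q0 ->
    psi (coprime_lift q0 q1 n) = psi n.
  by move=> n_cop1 n_cop0; apply: dchar_eqmod_divisor; rewrite ?lift_coprime ?coprime_lift_mod.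
have coprimeDq1 n : coprime (n + q1) q1 = coprime n q1.
  by rewrite -coprime_modl modnDr coprime_modl.
have descent_dchar : is_dchar q1 descent.
  split; first exact: dvdn_gt0 q0_gt0 q1_dvd_q0.
  split; [|split].
  - move=> n; rewrite /descent coprimeDq1.
    case: ifP => // n_coprime; apply: dchar_eqmod_divisor.
    + by rewrite lift_coprime ?coprimeDq1.
    + by rewrite lift_coprime.
    by rewrite !coprime_lift_mod modnDr.
  - move=> a b; rewrite /descent coprimeMl.
    have [a_cop|] := boolP (coprime a q1); last by rewrite mul0r.
    have [b_cop|] := boolP (coprime b q1); last by rewrite mulr0.
    rewrite -(dcharM psi_dchar); apply: dchar_eqmod_divisor.
    + by apply: lift_coprime; rewrite coprimeMl a_cop b_cop.
    + by rewrite coprimeMl !lift_coprime.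
    by rewrite coprime_lift_mod -modnMm -[in RHS]modnMm !coprime_lift_mod.
  - move=> n; rewrite /descent; case: ifP => n_coprime; last by rewrite eqxx.
    by rewrite (dchar_neq0 psi_dchar) lift_coprime.
have psi_descent n : psi n = descent n * principal R q0 n.
  rewrite /descent /principal.
  have [n_cop0|n_ncop0] := boolP (coprime n q0); last first.
    by rewrite mulr0 (dchar_ncoprime psi_dchar n_ncop0).
  by rewrite (coprime_dvdr q1_dvd_q0 n_cop0) mulr1 psi_lift // (coprime_dvdr q1_dvd_q0).
exact: (conj descent_dchar (conj psi_dchar (conj q1_dvd_q0 psi_descent))).
Qed.

End Descent.

Lemma primitive_ker_nontrivial (R : realType) q0 q1 (psi : nat -> R[i]) :
    primitive q0 psi -> (q1 %| q0)%N -> q1 != q0 ->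
  ~ (forall c, coprime c q0 -> c = 1 %[mod q1] -> psi c = 1).
Proof.
move=> [psi_dchar psi_prim] q1_dvd q1_neq psi_ker.
exact: psi_prim q1_dvd q1_neq (descent_induces psi_dchar q1_dvd psi_ker).
Qed.

Section GaussSum.
Variables (R : realType) (m : nat) (chi : nat -> R[i]).
Hypothesis chi_dchar : is_dchar m chi.

Let m_gt0 : (0 < m)%N := dchar_modulus_gt0 chi_dchar.

Lemma gaussE n : gauss m chi n = \sum_(k < m) chi k * efrac m (k * n).
Proof.
rewrite /gauss -(big_mkord xpredT (fun k => chi k * efrac m (k * n))).
rewrite big_nat_recr //= [in RHS]big_ltn // addrC; congr (_ + _).
rewrite -[X in chi X]add0n -[X in chi (0 + X)]mul1n dcharDmull //.
by rewrite -[expi _]/(efrac m (m * n)) efrac_multiple // /efrac mul0r expi0.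
Qed.

Lemma gauss_eqmod n n' : n = n' %[mod m] -> gauss m chi n = gauss m chi n'.
Proof.
move=> eq_nn'; rewrite !gaussE; apply: eq_bigr => k _; congr (_ * _).
by apply: efrac_eqmod; rewrite // -modnMmr eq_nn' modnMmr.
Qed.

Lemma gauss_mull c n : coprime c m -> gauss m chi n = chi c * gauss m chi (c * n).
Proof.
move=> c_coprime; rewrite !gaussE mulr_sumr.
rewrite (sum_ord_mulmod (fun a => chi a * efrac m (a * n)) m_gt0 c_coprime).
apply: eq_bigr => a _; rewrite -(dchar_mod chi_dchar) (dcharM chi_dchar) -mulrA.
by congr (_ * (_ * _)); apply: efrac_eqmod; rewrite // modnMml mulnCA mulnA.
Qed.

Lemma gauss_coprime n : coprime n m -> gauss m chi n = (chi n)^* * gauss m chi 1.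
Proof.
move=> n_coprime; rewrite (gauss_mull 1 n_coprime) muln1 mulrA.
by rewrite (conj_dcharK chi_dchar n_coprime) mul1r.
Qed.

End GaussSum.

Lemma gauss_primitive_ncoprime (R : realType) q0 (psi : nat -> R[i]) n :
  primitive q0 psi -> ~~ coprime n q0 -> gauss q0 psi n = 0.
Proof.
move=> psi_prim n_ncoprime; have psi_dchar := psi_prim.1.
have q0_gt0 := dchar_modulus_gt0 psi_dchar.
set g := gcdn n q0; set q1 := (q0 %/ g)%N.
have q0_eq : q0 = (q1 * g)%N by rewrite divnK ?dvdn_gcdr.
have q1_neq : q1 != q0.
  apply: contra n_ncoprime => /eqP q1_eq; rewrite /coprime -/g.
  by rewrite -(eqn_pmul2l q0_gt0) -{1}q1_eq -q0_eq muln1.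
have q1_dvd_q0 : (q1 %| q0)%N := dvdn_div (dvdn_gcdr n q0).
apply/eqP/contraT => gauss_neq0.
case: (primitive_ker_nontrivial psi_prim q1_dvd_q0 q1_neq) => c c_coprime c_ker.
have cn_n : (c * n = n %[mod q0])%N.
  have [k ->] := dvdnP (dvdn_gcdl n q0); rewrite -/g q0_eq mulnA -!muln_modl.
  by rewrite -modnMml c_ker modnMml mul1n.
have gauss_fixed : gauss q0 psi n = psi c * gauss q0 psi n.
  by rewrite {1}(gauss_mull psi_dchar n c_coprime) (gauss_eqmod psi_dchar cn_n).
by apply: (mulIf gauss_neq0); rewrite mul1r -gauss_fixed.
Qed.

Lemma gauss_primitive (R : realType) q0 (psi : nat -> R[i]) n :
  primitive q0 psi -> gauss q0 psi n = (psi n)^* * gauss q0 psi 1.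
Proof.
move=> psi_prim; have psi_dchar := psi_prim.1.
have [n_coprime|n_ncoprime] := boolP (coprime n q0); first exact: gauss_coprime.
by rewrite gauss_primitive_ncoprime // (dchar_ncoprime psi_dchar n_ncoprime) conjC0 mul0r.
Qed.

Lemma sum_dchar_efrac (R : realType) q0 (psi : nat -> R[i]) s d :
    is_dchar q0 psi -> (0 < s)%N ->
  \sum_(j < q0 * s) psi j * efrac (q0 * s) (j * d)
  = if (s %| d)%N then s%:R * gauss q0 psi (d %/ s) else 0.
Proof.
move=> psi_dchar s_gt0; have q0_gt0 := dchar_modulus_gt0 psi_dchar.
rewrite (sum_ord_blocks _ _ (fun j => psi j * efrac (q0 * s) (j * d))).
have block b a : psi (q0 * b + a)%N * efrac (q0 * s) ((q0 * b + a) * d)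
    = efrac s (b * d) * (psi a * efrac (q0 * s) (a * d)).
  rewrite addnC mulnC (dcharDmull psi_dchar) mulnDl efracD.
  by rewrite -mulnA mulnCA efracMl // mulrA mulrC.
under eq_bigr => b _ do under eq_bigr => a _ do rewrite block.
under eq_bigr => b _ do rewrite -mulr_sumr.
rewrite -mulr_suml sum_efrac //; case: ifP => [/dvdnP[k ->]|_]; last by rewrite mul0r.
rewrite mulnK // (gaussE psi_dchar); congr (_ * _); apply: eq_bigr => a _.
by rewrite mulnA [(q0 * s)%N]mulnC -[(a * k * s)%N]mulnC efracMl.
Qed.

Section InducedCharacter.
Variables (R : realType) (q q0 : nat) (chi psi : nat -> R[i]).
Hypothesis chi_psi : induces q0 psi q chi.

Let psi_dchar : is_dchar q0 psi := chi_psi.1.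
Let chi_dchar : is_dchar q chi := chi_psi.2.1.
Let q0_dvd_q : (q0 %| q)%N := chi_psi.2.2.1.
Let q0_gt0 : (0 < q0)%N := dchar_modulus_gt0 psi_dchar.
Let q_gt0 : (0 < q)%N := dchar_modulus_gt0 chi_dchar.
Let q_eq : q = (q0 * (q %/ q0))%N.
Proof. by rewrite mulnC divnK. Qed.

Lemma induced_index_gt0 : (0 < q %/ q0)%N.
Proof. by rewrite divn_gt0 // dvdn_leq. Qed.
Let r_gt0 : (0 < q %/ q0)%N := induced_index_gt0.

Lemma induced_dchar_moebius k :
  chi k = \sum_(e <- divisors (q %/ q0) | (e %| k)%N) (moebius e)%:~R * psi k.
Proof.
rewrite chi_psi.2.2.2 /principal -mulr_suml -rmorph_sum.
have [k_cop0|k_ncop0] := boolP (coprime k q0); last first.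
  by rewrite (dchar_ncoprime psi_dchar k_ncop0) mul0r mulr0.
have gcd_gt0 : (0 < gcdn k (q %/ q0))%N by rewrite gcdn_gt0 r_gt0 orbT.
have divisors_gcd : perm_eq [seq e <- divisors (q %/ q0) | (e %| k)%N]
                            (divisors (gcdn k (q %/ q0))).
  apply: uniq_perm; rewrite ?filter_uniq ?divisors_uniq //.
  by move=> e; rewrite mem_filter -!dvdn_divisors // dvdn_gcd andbC.
rewrite -big_filter (perm_big _ divisors_gcd) sum_moebius_divisors //.
rewrite {1}q_eq coprimeMr k_cop0 /coprime.
by case: (_ == 1%N); rewrite /= rmorph_nat ?mulr1 ?mul1r ?mulr0 ?mul0r.
Qed.

Lemma gauss_induced d :
  gauss q chi d = \sum_(e <- divisors (q %/ q0))
     (moebius e)%:~R * psi e * (if (q %/ q0 %/ e %| d)%N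
        then (q %/ q0 %/ e)%:R * gauss q0 psi (d %/ (q %/ q0 %/ e)) else 0).
Proof.
rewrite (gaussE chi_dchar).
under eq_bigr => k _ do rewrite induced_dchar_moebius mulr_suml big_mkcond.
rewrite exchange_big /=; apply: eq_big_seq => e; rewrite -dvdn_divisors // => e_dvd_r.
have e_gt0 : (0 < e)%N := dvdn_gt0 r_gt0 e_dvd_r.
set s := (q %/ q0 %/ e)%N.
have s_gt0 : (0 < s)%N by rewrite divn_gt0 // dvdn_leq.
have q_es : q = (e * (q0 * s))%N.
  by rewrite mulnCA /s [(e * _)%N]mulnC divnK // -q_eq.
rewrite -(sum_dchar_efrac _ psi_dchar s_gt0) mulr_sumr -big_mkcond /= q_es.
rewrite (sum_ord_dvd _ (fun k => (moebius e)%:~R * psi k * efrac (e * (q0 * s)) (k * d))) //.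
by apply: eq_bigr => j _; rewrite (dcharM psi_dchar) -mulnA efracMl // !mulrA.
Qed.

Hypothesis psi_prim : primitive q0 psi.

Lemma gauss_induced_primitive d :
  gauss q chi d = \sum_(s <- divisors (q %/ q0) | (s %| d)%N)
     (s%:R * gauss q0 psi 1 * (moebius (q %/ q0 %/ s))%:~R * psi (q %/ q0 %/ s))
       * (psi (d %/ s))^*.
Proof.
rewrite gauss_induced (perm_big _ (perm_divisors_divn r_gt0)) big_map [RHS]big_mkcond.
apply: eq_big_seq => s; rewrite -dvdn_divisors // => s_dvd_r.
rewrite divn_div_id //; case: ifP => _; last by rewrite mulr0.
by rewrite (gauss_primitive _ psi_prim); ring.
Qed.

End InducedCharacter.

Theorem lemma4p2 (R : realType) (q q0 : nat) (chi psi : nat -> R[i])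
  (Hpsi : primitive q0 psi) (Hind : induces q0 psi q chi) (n : nat) (Hn : (0 < n)%N) :
  \sum_(d <- divisors n)
     gauss q chi d * (moebius (n %/ d)%N)%:~R * (psi (n %/ d)%N)^*
  = if (n %| q %/ q0)%N then
      n%:R * gauss q0 psi 1 * (moebius (q %/ (n * q0))%N)%:~R * psi (q %/ (n * q0))%N
    else 0.
Proof.
have psi_dchar := Hpsi.1.
under eq_bigr => d _ do rewrite (gauss_induced_primitive Hind Hpsi).
rewrite (sum_moebius_twisted (f := fun m => (psi m)^*)
  (fun s => s%:R * gauss q0 psi 1 * (moebius (q %/ q0 %/ s)%N)%:~R * psi (q %/ q0 %/ s)%N))
  ?(induced_index_gt0 Hind) //.
- by rewrite mulnC divnMA.
- by rewrite /= (dchar1 psi_dchar) rmorph1.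
- by move=> a b; rewrite /= (dcharM psi_dchar) rmorphM.
Qed.
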